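(* There is a quantity $\eta_n\to0$ as $n\to\infty$ (uniform over configurations, edges, and graphs in $\mathcal H_L$) such that for every $X\in\mathcal G_n$, every pair $e$, and every $G=(V,E)\in\mathcal H_L$, if $X(0)=X$ and $X(1)$ is obtained by one step of the Glauber dynamics, then $$\mathbb E\left[\frac{N_G(X(1),e)-N_G(X(0),e)}{n^{|V|-2}}\right]\le(1+\eta_n)\frac{2}{\binom n2}|E|(|E|-1)\Big[-r_G(X,e)^{|E|-1}+\varphi(\bar r(X))\,\bar r(X)^{|E|-2}\Big].$$
   Context: Fix an integer $s\ge 1$, graphs $G_1,\dots,G_s$ where $G_i$ has vertex set $V_i=\{1,\dots,|V_i|\}$ and edge set $E_i$, with $G_1$ the single edge on $\{1,2\}$, and an integer $L\ge\max_i|V_i|$. Fix $\beta=(\beta_1,\dots,\beta_s)$ with $\beta_1\in\mathbb R$, $\beta_i>0$ for $i\ge 2$. $\mathcal G_n$ is the set of simple graphs on $[n]$ (a graph is its edge set). For a graph $G=(V,E)$, $V=\{1,\dots,m\}$, and $X\in\mathcal G_n$: $N_G(X)$ is the number of injective $\sigma:V\to[n]$ with $\{\sigma(i),\sigma(j)\}\in X$ for all $\{i,j\}\in E$; for a pair $e\in\binom{[n]}2$, $N_G(X,e)$ is the number of injective $\sigma:V\to[n]$ such that $\{\sigma(i),\sigma(j)\}\in X\cup\{e\}$ for all $\{i,j\}\in E$ and $e=\{\sigma(i),\sigma(j)\}$ for some $\{i,j\}\in E$. Gibbs measure $p_n(X)\propto\exp(H(X))$, $H(X)=\sum_i\beta_iN_{G_i}(X)/n^{|V_i|-2}$.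 Glauber dynamics: from $X$, pick a pair $e$ uniformly among the $\binom n2$ pairs, move to $X\cup\{e\}$ with probability $e^{\partial_eH(X)}/(1+e^{\partial_eH(X)})$, where $\partial_eH(X)=H(X\cup\{e\})-H(X\setminus\{e\})$, and to $X\setminus\{e\}$ otherwise. $\Psi(p)=\sum_{i=1}^s2\beta_i|E_i|p^{|E_i|-1}$, $\varphi(p)=e^{\Psi(p)}/(1+e^{\Psi(p)})$. $\mathcal H_L$ is the set of graphs with at most $L$ vertices and at least $2$ edges. For $G=(V,E)\in\mathcal H_L$: $r_G(X,e)=\big(N_G(X,e)/(2|E|n^{|V|-2})\big)^{1/(|E|-1)}$, and $\bar r(X)=\max_{e,\,G\in\mathcal H_L}r_G(X,e)$. *)

From Stdlib Require Import Reals List Arith Bool.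
Import ListNotations.
Open Scope R_scope.
Local Open Scope bool_scope.

(** A (labelled, simple) graph G = (V,E) with V = {0,...,m-1}:
    a pair (m, E) where every edge (i,j) satisfies i < j < m and E has no repeats.
    (Vertices are 0-based instead of the paper's 1-based; harmless relabelling.) *)
Definition graph : Type := (nat * list (nat * nat))%type.
Definition nv (G : graph) : nat := fst G.
Definition edges (G : graph) : list (nat * nat) := snd G.

Definition is_graph (G : graph) : Prop :=
  NoDup (edges G) /\
  (forall p, In p (edges G) -> (fst p < snd p)%nat /\ (snd p < nv G)%nat).

Definition in_HL (L : nat) (G : graph) : Prop :=
  is_graph G /\ (nv G <= L)%nat /\ (2 <= length (edges G))%nat.

(** A graph on [n] = {0,...,n-1}, given by its (symmetric, loopless) adjacency. *)
Definition config : Type := nat -> nat -> bool.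
Definition is_config (n : nat) (X : config) : Prop :=
  (forall a b, X a b = X b a) /\ (forall a, X a a = false) /\
  (forall a b, X a b = true -> (a < n)%nat /\ (b < n)%nat).

(** An (unordered) pair {u,v} of [n], represented as (u,v) with u < v < n. *)
Definition is_pair (n : nat) (e : nat * nat) : Prop :=
  (fst e < snd e)%nat /\ (snd e < n)%nat.

Definition all_pairs (m : nat) : list (nat * nat) :=
  flat_map (fun j => map (fun i => (i, j)) (seq 0 j)) (seq 0 m).

Definition samepair (e : nat * nat) (a b : nat) : bool :=
  (Nat.eqb (fst e) a && Nat.eqb (snd e) b) || (Nat.eqb (fst e) b && Nat.eqb (snd e) a).

Definition addE (X : config) (e : nat * nat) : config :=
  fun a b => X a b || samepair e a b.
Definition remE (X : config) (e : nat * nat) : config :=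
  fun a b => X a b && negb (samepair e a b).

Fixpoint tuples (m n : nat) : list (list nat) :=
  match m with
  | O => [[]]
  | S m' => flat_map (fun l => map (fun a => a :: l) (seq 0 n)) (tuples m' n)
  end.

Fixpoint nodupb (l : list nat) : bool :=
  match l with
  | [] => true
  | x :: t => negb (existsb (Nat.eqb x) t) && nodupb t
  end.

(** injective maps sigma : V -> [n], sigma i = nth i l 0 *)
Definition injections (m n : nat) : list (list nat) := filter nodupb (tuples m n).

Definition NG (n : nat) (G : graph) (X : config) : nat :=
  length (filter (fun l =>
    forallb (fun p => X (nth (fst p) l 0%nat) (nth (snd p) l 0%nat)) (edges G))
    (injections (nv G) n)).

Definition NGe (n : nat) (G : graph) (X : config) (e : nat * nat) : nat :=
  length (filter (fun l =>
    forallb (fun p => X (nth (fst p) l 0%nat) (nth (snd p) l 0%nat)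
                      || samepair e (nth (fst p) l 0%nat) (nth (snd p) l 0%nat)) (edges G)
    && existsb (fun p => samepair e (nth (fst p) l 0%nat) (nth (snd p) l 0%nat)) (edges G))
    (injections (nv G) n)).

(** n^{|V|-2} with an integer exponent *)
Definition npow (n : nat) (G : graph) : R :=
  powerRZ (INR n) (Z.of_nat (nv G) - 2)%Z.

Fixpoint sumR (l : list R) : R :=
  match l with [] => 0 | x :: t => x + sumR t end.

Definition Ham (s n : nat) (Gs : nat -> graph) (beta : nat -> R) (X : config) : R :=
  sumR (map (fun i => beta i * INR (NG n (Gs i) X) / npow n (Gs i)) (seq 0 s)).

Definition padd (s n : nat) (Gs : nat -> graph) (beta : nat -> R) (X : config)
    (f : nat * nat) : R :=
  let d := Ham s n Gs beta (addE X f) - Ham s n Gs beta (remE X f) in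
  exp d / (1 + exp d).

Definition binom2R (n : nat) : R := INR n * (INR n - 1) / 2.

(** Expectation of F(X(1)) for one Glauber step started at X(0) = X *)
Definition glauberE (s n : nat) (Gs : nat -> graph) (beta : nat -> R) (X : config)
    (F : config -> R) : R :=
  / binom2R n *
  sumR (map (fun f => padd s n Gs beta X f * F (addE X f)
                      + (1 - padd s n Gs beta X f) * F (remE X f)) (all_pairs n)).

Definition Psi (s : nat) (Gs : nat -> graph) (beta : nat -> R) (p : R) : R :=
  sumR (map (fun i => 2 * beta i * INR (length (edges (Gs i)))
                        * p ^ (length (edges (Gs i)) - 1)) (seq 0 s)).
Definition phi (s : nat) (Gs : nat -> graph) (beta : nat -> R) (p : R) : R :=
  exp (Psi s Gs beta p) / (1 + exp (Psi s Gs beta p)).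

(** nonnegative k-th root of x >= 0 (with root of 0 equal to 0) *)
Definition rootR (k : nat) (x : R) : R :=
  if Req_EM_T x 0 then 0 else Rpower x (/ INR k).

Definition rG (n : nat) (G : graph) (X : config) (e : nat * nat) : R :=
  rootR (length (edges G) - 1)
    (INR (NGe n G X e) / (2 * INR (length (edges G)) * npow n G)).

Fixpoint sublists {A : Type} (l : list A) : list (list A) :=
  match l with
  | [] => [[]]
  | x :: t => sublists t ++ map (cons x) (sublists t)
  end.

Definition HL_list (L : nat) : list graph :=
  flat_map (fun m => map (fun E => (m, E))
                        (filter (fun E => Nat.leb 2 (length E)) (sublists (all_pairs m))))
           (seq 0 (S L)).

Fixpoint maxR (l : list R) : R :=
  match l with [] => 0 | x :: t => Rmax x (maxR t) end.

(** rbar(X) = max over pairs e of [n] and G in H_L of r_G(X,e) (all r_G >= 0) *)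
Definition rbar (L n : nat) (X : config) : R :=
  maxR (flat_map (fun e => map (fun G => rG n G X e) (HL_list L)) (all_pairs n)).

(** Fix a pair e and a pattern G = (V,E) with k = |E| >= 2 edges, and write
    c = n^{|V|-2}.  For a resampled pair f let the "gain" g_f be the number of
    injections that are copies of G through e in X + f but not in X - f; these
    are exactly the copies that use f at an edge of G other than the one sent
    onto e.  Then one Glauber step changes N_G(.,e) by +g_f (f added) or -g_f
    (f removed), so
        E[N_G(X(1),e) - N_G(X,e)] = C(n,2)^{-1} sum_f (p_f - 1[f in X]) g_f,
    where p_f is the acceptance probability of f.  We bound the two sums:
    - Gain:  p_f <= phi(rbar(X)), since the energy increment of f is bounded
      termwise by Psi(rbar(X)); and sum_f g_f <= sum_{b in E} N_{G-b}(X,e)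
      <= k * 2(k-1) c rbar^{k-2}  (double counting: a gained copy sees f at
      exactly one edge b, and is then a copy of G-b through e in X).
    - Loss:  sum_{f in X} g_f >= (k-1) N_G(X,e) = (k-1) 2k c r_G(X,e)^{k-1},
      since every copy through e in X uses each of its k-1 other edges. *)

From Stdlib Require Import Reals List Arith Lia Lra Bool Permutation FunctionalExtensionality.
Import ListNotations.
Open Scope R_scope.

Definition ind (b : bool) : R := if b then 1 else 0.

Lemma ind_nonneg b : 0 <= ind b.
Proof. destruct b; simpl; lra. Qed.

Lemma ind_le1 b : ind b <= 1.
Proof. destruct b; simpl; lra. Qed.

Lemma ind_andb a b : ind (a && b) = ind a * ind b.
Proof. destruct a, b; simpl; lra. Qed.

Lemma ind_negb a : ind (negb a) = 1 - ind a.
Proof. destruct a; simpl; lra. Qed.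

Lemma ind_orb_le a b : ind (a || b) <= ind a + ind b.
Proof. destruct a, b; simpl; lra. Qed.

Lemma sumR_app l1 l2 : sumR (l1 ++ l2) = sumR l1 + sumR l2.
Proof. induction l1; simpl; [lra | rewrite IHl1; lra]. Qed.

Lemma sumR_ext {A} (f g : A -> R) l :
  (forall x, In x l -> f x = g x) -> sumR (map f l) = sumR (map g l).
Proof.
  induction l; simpl; intros H; auto.
  rewrite H, IHl; auto.
Qed.

Lemma sumR_le {A} (f g : A -> R) l :
  (forall x, In x l -> f x <= g x) -> sumR (map f l) <= sumR (map g l).
Proof.
  induction l; simpl; intros H; [lra |].
  assert (f a <= g a) by auto. assert (sumR (map f l) <= sumR (map g l)) by auto. lra.
Qed.

Lemma sumR_nonneg {A} (f : A -> R) l :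
  (forall x, In x l -> 0 <= f x) -> 0 <= sumR (map f l).
Proof.
  induction l; simpl; intros H; [lra |].
  assert (0 <= f a) by auto. assert (0 <= sumR (map f l)) by auto. lra.
Qed.

Lemma sumR_plus {A} (f g : A -> R) l :
  sumR (map (fun x => f x + g x) l) = sumR (map f l) + sumR (map g l).
Proof. induction l; simpl; [lra | rewrite IHl; lra]. Qed.

Lemma sumR_minus {A} (f g : A -> R) l :
  sumR (map (fun x => f x - g x) l) = sumR (map f l) - sumR (map g l).
Proof. induction l; simpl; [lra | rewrite IHl; lra]. Qed.

Lemma sumR_scal {A} (c : R) (f : A -> R) l :
  sumR (map (fun x => c * f x) l) = c * sumR (map f l).
Proof. induction l; simpl; [lra | rewrite IHl; lra]. Qed.

Lemma sumR_const {A} (c : R) (l : list A) :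
  sumR (map (fun _ => c) l) = INR (length l) * c.
Proof.
  induction l; simpl length; simpl map; simpl sumR; [simpl; lra |].
  rewrite IHl, S_INR; lra.
Qed.

Lemma sumR_swap {A B} (g : A -> B -> R) la lb :
  sumR (map (fun a => sumR (map (fun b => g a b) lb)) la) =
  sumR (map (fun b => sumR (map (fun a => g a b) la)) lb).
Proof.
  induction la; simpl.
  - rewrite sumR_const; lra.
  - rewrite IHla, <- sumR_plus. reflexivity.
Qed.

Lemma sumR_flat_map {A B} (h : B -> R) (f : A -> list B) l :
  sumR (map h (flat_map f l)) = sumR (map (fun a => sumR (map h (f a))) l).
Proof. induction l; simpl; auto. rewrite map_app, sumR_app, IHl; auto. Qed.

Lemma sumR_single_le {A} (f : A -> R) l x :
  In x l -> (forall y, In y l -> 0 <= f y) -> f x <= sumR (map f l).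
Proof.
  induction l; simpl; intros Hx H; [contradiction |].
  destruct Hx as [<- | Hx].
  - assert (0 <= sumR (map f l)) by (apply sumR_nonneg; auto). lra.
  - assert (0 <= f a) by auto. assert (f x <= sumR (map f l)) by auto. lra.
Qed.

Lemma len_filter {A} (P : A -> bool) l :
  INR (length (filter P l)) = sumR (map (fun x => ind (P x)) l).
Proof.
  induction l; simpl; auto.
  destruct (P a); simpl length; [rewrite S_INR |]; rewrite IHl; simpl; lra.
Qed.

Lemma sumR_filter {A} (Q : A -> bool) (h : A -> R) l :
  sumR (map h (filter Q l)) = sumR (map (fun x => ind (Q x) * h x) l).
Proof. induction l; simpl; auto. destruct (Q a); simpl; rewrite IHl; lra. Qed.

Lemma sum_ind_zero {A} (P : A -> bool) l :
  (forall x, In x l -> P x = false) -> sumR (map (fun x => ind (P x)) l) = 0.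
Proof.
  induction l; simpl; intros H; auto.
  rewrite H, IHl by auto. simpl; lra.
Qed.

Lemma sum_ind_le_exists {A} (P : A -> bool) l :
  NoDup l -> (forall x y, In x l -> In y l -> P x = true -> P y = true -> x = y) ->
  sumR (map (fun x => ind (P x)) l) <= ind (existsb P l).
Proof.
  induction l as [| a l IH]; simpl; intros Hnd Hex; [lra |].
  inversion Hnd; subst.
  destruct (P a) eqn:Ha; simpl.
  - rewrite sum_ind_zero; [lra |].
    intros x Hx. destruct (P x) eqn:Px; auto.
    assert (a = x) by (apply Hex; auto). subst. contradiction.
  - rewrite Rplus_0_l. apply IH; auto.
Qed.

Lemma sum_ind_le1 {A} (P : A -> bool) l :
  NoDup l -> (forall x y, In x l -> In y l -> P x = true -> P y = true -> x = y) ->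
  sumR (map (fun x => ind (P x)) l) <= 1.
Proof.
  intros. eapply Rle_trans; [apply sum_ind_le_exists; auto | apply ind_le1].
Qed.

Lemma tuples_prop m n l :
  In l (tuples m n) -> length l = m /\ (forall x, In x l -> (x < n)%nat).
Proof.
  revert l; induction m; simpl; intros l H.
  - destruct H as [<- | []]; simpl; split; auto; intros x [].
  - apply in_flat_map in H as [l' [Hl' Hin]]. apply in_map_iff in Hin as [a [<- Ha]].
    apply in_seq in Ha. destruct (IHm l' Hl') as [H1 H2]. simpl; split; [lia |].
    intros x [<- | Hx]; [lia | auto].
Qed.

Lemma nodupb_NoDup l : nodupb l = true -> NoDup l.
Proof.
  induction l; simpl; intros H; [constructor |].
  apply andb_true_iff in H as [H1 H2]. constructor; auto.
  intro Hin. apply negb_true_iff in H1.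
  assert (existsb (Nat.eqb a) l = true)
    by (apply existsb_exists; exists a; split; auto; apply Nat.eqb_refl).
  congruence.
Qed.

Lemma inj_prop m n l : In l (injections m n) ->
  NoDup l /\ length l = m /\ (forall x, In x l -> (x < n)%nat).
Proof.
  unfold injections; intros H; apply filter_In in H as [H1 H2].
  apply tuples_prop in H1 as [? ?]. repeat split; auto. apply nodupb_NoDup; auto.
Qed.

Lemma all_pairs_In m f : In f (all_pairs m) <-> (fst f < snd f < m)%nat.
Proof.
  unfold all_pairs. rewrite in_flat_map. split.
  - intros [j [Hj Hf]]. apply in_map_iff in Hf as [i [<- Hi]].
    apply in_seq in Hj. apply in_seq in Hi. simpl; lia.
  - destruct f as [i j]; simpl; intros H. exists j; split; [apply in_seq; lia |].
    apply in_map_iff. exists i; split; auto; apply in_seq; lia.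
Qed.

Lemma all_pairs_NoDup m : NoDup (all_pairs m).
Proof.
  induction m; [constructor |]. unfold all_pairs in *.
  rewrite seq_S, flat_map_app. simpl. rewrite app_nil_r. apply NoDup_app; auto.
  - apply FinFun.Injective_map_NoDup; [intros x y E; inversion E; auto | apply seq_NoDup].
  - intros a Ha Hb. apply in_map_iff in Hb as [i [<- Hi]].
    apply in_flat_map in Ha as [j [Hj Hf]]. apply in_map_iff in Hf as [i' [E Hi']].
    inversion E. apply in_seq in Hj. lia.
Qed.

Definition pair_eq_dec : forall x y : nat * nat, {x = y} + {x <> y}.
Proof. decide equality; apply Nat.eq_dec. Defined.

Lemma sublists_perm {A} (eq_dec : forall x y : A, {x = y} + {x <> y}) (l E : list A) :
  NoDup E -> incl E l -> exists s, In s (sublists l) /\ Permutation s E.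
Proof.
  revert E; induction l as [| x t IH]; simpl; intros E Hnd Hinc.
  - exists []; split; auto. destruct E as [| a E]; [auto |].
    exfalso; apply (Hinc a); simpl; auto.
  - destruct (in_dec eq_dec x E) as [Hx | Hx].
    + apply in_split in Hx as [E1 [E2 ->]].
      apply NoDup_remove in Hnd as [Hnd' Hni].
      destruct (IH (E1 ++ E2)) as [s [Hs Hp]]; auto.
      { intros y Hy.
        assert (In y (x :: t))
          by (apply Hinc; apply in_app_or in Hy; apply in_or_app; simpl; tauto).
        destruct H as [<- | H]; auto; contradiction. }
      exists (x :: s); split.
      * apply in_or_app; right; apply in_map; auto.
      * rewrite <- Permutation_middle. constructor; auto.
    + destruct (IH E) as [s [Hs Hp]]; auto.
      { intros y Hy. destruct (Hinc y Hy) as [<- | H]; auto; contradiction. }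
      exists s; split; auto. apply in_or_app; auto.
Qed.

Lemma forallb_perm {A} (f : A -> bool) E E' : Permutation E E' -> forallb f E = forallb f E'.
Proof. induction 1; simpl; auto; try congruence. destruct (f x), (f y); auto. Qed.

Lemma existsb_perm {A} (f : A -> bool) E E' : Permutation E E' -> existsb f E = existsb f E'.
Proof. induction 1; simpl; auto; try congruence. destruct (f x), (f y); auto. Qed.

Definition delete_edge (G : graph) (b : nat * nat) : graph :=
  (nv G, remove pair_eq_dec b (edges G)).

Lemma delete_edge_length G b : NoDup (edges G) -> In b (edges G) ->
  length (edges (delete_edge G b)) = (length (edges G) - 1)%nat.
Proof.
  unfold delete_edge; simpl. intros Hnd Hb.
  apply in_split in Hb as [E1 [E2 HE]]. rewrite HE in *.
  apply NoDup_remove in Hnd as [_ Hni].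
  rewrite remove_app. simpl. destruct (pair_eq_dec b b); [| congruence].
  rewrite !notin_remove;
    [| intro; apply Hni; apply in_or_app; auto | intro; apply Hni; apply in_or_app; auto].
  rewrite !length_app; simpl; lia.
Qed.

Lemma delete_edge_graph G b : is_graph G -> is_graph (delete_edge G b).
Proof.
  intros [Hnd HE]. unfold delete_edge; split; simpl.
  - clear HE; induction Hnd; simpl; [constructor |]. destruct (pair_eq_dec b x); auto.
    constructor; auto. intro Hin. apply in_remove in Hin as [Hin _]. contradiction.
  - intros p Hp. apply in_remove in Hp as [Hp _]. apply HE; auto.
Qed.

(** * Copies of a pattern *)

Definition hits (g : nat * nat) (l : list nat) (p : nat * nat) : bool :=
  samepair g (nth (fst p) l 0%nat) (nth (snd p) l 0%nat).

Definition copy (E : list (nat * nat)) (Y : config) (l : list nat) : bool :=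
  forallb (fun p => Y (nth (fst p) l 0%nat) (nth (snd p) l 0%nat)) E.

Definition copy_through (E : list (nat * nat)) (Y : config) (e : nat * nat)
    (l : list nat) : bool :=
  forallb (fun p => Y (nth (fst p) l 0%nat) (nth (snd p) l 0%nat) || hits e l p) E
  && existsb (hits e l) E.

Lemma NG_copy n G Y : NG n G Y = length (filter (copy (edges G) Y) (injections (nv G) n)).
Proof. reflexivity. Qed.

Lemma NGe_copy_through n G Y e :
  NGe n G Y e = length (filter (copy_through (edges G) Y e) (injections (nv G) n)).
Proof. reflexivity. Qed.

Lemma NGe_nil n G Y e : edges G = [] -> NGe n G Y e = 0%nat.
Proof.
  intros H. unfold NGe. rewrite H. simpl.
  induction (injections (nv G) n); simpl; auto.
Qed.

Lemma NGe_perm n m E E' Y e : Permutation E E' -> NGe n (m, E) Y e = NGe n (m, E') Y e.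
Proof.
  intros Hp. unfold NGe; simpl. f_equal. apply filter_ext; intros l.
  rewrite (forallb_perm _ _ _ Hp), (existsb_perm _ _ _ Hp); auto.
Qed.

(** * Counting tuples with prescribed values *)

Lemma sumR_tuples_S m n (h : list nat -> R) :
  sumR (map h (tuples (S m) n)) =
  sumR (map (fun l => sumR (map (fun a => h (a :: l)) (seq 0 n))) (tuples m n)).
Proof.
  simpl tuples. rewrite sumR_flat_map. apply sumR_ext; intros. rewrite map_map; auto.
Qed.

Lemma count_all m n : sumR (map (fun _ => 1) (tuples m n)) = INR n ^ m.
Proof.
  induction m; [simpl; lra |].
  rewrite sumR_tuples_S, (sumR_ext _ (fun _ => INR n * 1)).
  - rewrite sumR_scal, IHm; simpl; lra.
  - intros; rewrite sumR_const, length_seq; lra.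
Qed.

Lemma sum_seq_eqb n a : (a < n)%nat ->
  sumR (map (fun x => ind (Nat.eqb x a)) (seq 0 n)) = 1.
Proof.
  intros Ha. apply Rle_antisym.
  - apply sum_ind_le1; [apply seq_NoDup |]. intros x y _ _ H1 H2.
    apply Nat.eqb_eq in H1, H2; congruence.
  - assert (Hin : In a (seq 0 n)) by (apply in_seq; lia).
    eapply Rle_trans; [| apply (sumR_single_le _ _ a Hin)].
    + cbv beta; rewrite Nat.eqb_refl; simpl; lra.
    + intros; apply ind_nonneg.
Qed.

Lemma count1 n m p a : (p < m)%nat -> (a < n)%nat ->
  sumR (map (fun l => ind (Nat.eqb (nth p l 0%nat) a)) (tuples m n)) = INR n ^ (m - 1).
Proof.
  revert p; induction m; intros p Hp Ha; [lia |].
  rewrite sumR_tuples_S. destruct p as [| p].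
  - rewrite (sumR_ext _ (fun _ => 1)).
    + rewrite count_all. replace (S m - 1)%nat with m by lia; auto.
    + intros l _. simpl nth. apply sum_seq_eqb; auto.
  - rewrite (sumR_ext _ (fun l => INR n * ind (Nat.eqb (nth p l 0%nat) a))).
    + rewrite sumR_scal, IHm by lia. replace (S m - 1)%nat with (S (m - 1)) by lia.
      simpl; lra.
    + intros l _. simpl nth. rewrite sumR_const, length_seq; lra.
Qed.

Lemma count2 n m p1 p2 a b :
  p1 <> p2 -> (p1 < m)%nat -> (p2 < m)%nat -> (a < n)%nat -> (b < n)%nat ->
  sumR (map (fun l => ind (Nat.eqb (nth p1 l 0%nat) a && Nat.eqb (nth p2 l 0%nat) b))
            (tuples m n))
  = INR n ^ (m - 2).
Proof.
  revert p1 p2; induction m; intros p1 p2 Hne H1 H2 Ha Hb; [lia |].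
  rewrite sumR_tuples_S. destruct p1 as [| q1], p2 as [| q2]; [lia | | |].
  - rewrite (sumR_ext _ (fun l => ind (Nat.eqb (nth q2 l 0%nat) b))).
    + rewrite count1 by lia. f_equal; lia.
    + intros l _. simpl nth.
      rewrite (sumR_ext _ (fun x => ind (Nat.eqb (nth q2 l 0%nat) b) * ind (Nat.eqb x a)))
        by (intros; rewrite ind_andb; lra).
      rewrite sumR_scal, sum_seq_eqb; auto; lra.
  - rewrite (sumR_ext _ (fun l => ind (Nat.eqb (nth q1 l 0%nat) a))).
    + rewrite count1 by lia. f_equal; lia.
    + intros l _. simpl nth.
      rewrite (sumR_ext _ (fun x => ind (Nat.eqb (nth q1 l 0%nat) a) * ind (Nat.eqb x b)))
        by (intros; rewrite ind_andb; lra).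
      rewrite sumR_scal, sum_seq_eqb; auto; lra.
  - rewrite (sumR_ext _ (fun l => INR n *
        ind (Nat.eqb (nth q1 l 0%nat) a && Nat.eqb (nth q2 l 0%nat) b))).
    + rewrite sumR_scal, IHm by lia. replace (S m - 2)%nat with (S (m - 2)) by lia.
      simpl; lra.
    + intros l _. simpl nth. rewrite sumR_const, length_seq; lra.
Qed.

Lemma count_hits n m g q1 q2 : (q1 < q2 < m)%nat -> (fst g < n)%nat -> (snd g < n)%nat ->
  sumR (map (fun l => ind (hits g l (q1, q2))) (tuples m n)) <= 2 * INR n ^ (m - 2).
Proof.
  intros Hq Hg1 Hg2.
  apply Rle_trans with (sumR (map (fun l =>
      ind (Nat.eqb (nth q1 l 0%nat) (fst g) && Nat.eqb (nth q2 l 0%nat) (snd g))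
    + ind (Nat.eqb (nth q1 l 0%nat) (snd g) && Nat.eqb (nth q2 l 0%nat) (fst g)))
    (tuples m n))).
  - apply sumR_le; intros l _. unfold hits, samepair; simpl.
    rewrite (Nat.eqb_sym (fst g) (nth q1 l 0%nat)), (Nat.eqb_sym (snd g) (nth q2 l 0%nat)),
      (Nat.eqb_sym (fst g) (nth q2 l 0%nat)), (Nat.eqb_sym (snd g) (nth q1 l 0%nat)).
    eapply Rle_trans; [apply ind_orb_le |].
    rewrite (andb_comm (nth q2 l 0%nat =? fst g)). lra.
  - rewrite sumR_plus, !count2 by lia. lra.
Qed.

Lemma sum_inj_le m n (h : list nat -> R) : (forall l, 0 <= h l) ->
  sumR (map h (injections m n)) <= sumR (map h (tuples m n)).
Proof.
  intros Hh. unfold injections. rewrite sumR_filter. apply sumR_le; intros l _.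
  pose proof (Hh l). destruct (nodupb l); simpl; lra.
Qed.

Lemma npow_pos n G : (0 < n)%nat -> 0 < npow n G.
Proof. intros; unfold npow; apply powerRZ_lt, lt_0_INR; auto. Qed.

Lemma npow_nat n G : (2 <= nv G)%nat -> npow n G = INR n ^ (nv G - 2).
Proof. intros H. unfold npow. rewrite pow_powerRZ. f_equal. lia. Qed.

Lemma NGe_one_edge_le n G Y g q : is_graph G -> edges G = [q] -> is_pair n g ->
  INR (NGe n G Y g) <= 2 * INR n ^ (nv G - 2).
Proof.
  intros [_ HG] HE [Hg1 Hg2].
  assert (Hq : (fst q < snd q < nv G)%nat) by (apply HG; rewrite HE; simpl; auto).
  rewrite NGe_copy_through, len_filter, HE.
  apply Rle_trans with (sumR (map (fun l => ind (hits g l q)) (injections (nv G) n))).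
  - apply sumR_le; intros l _. unfold copy_through; simpl.
    destruct (Y _ _), (hits g l q); simpl; lra.
  - eapply Rle_trans; [apply sum_inj_le; intros; apply ind_nonneg |].
    destruct q as [q1 q2]. apply count_hits; simpl in *; lia.
Qed.

(** The single edge has exactly 2 copies through any pair (both orientations). *)
Lemma NGe_edge n X f : is_pair n f -> INR (NGe n (2%nat, [(0%nat, 1%nat)]) X f) = 2.
Proof.
  intros [Hf1 Hf2]. rewrite NGe_copy_through, len_filter. simpl edges; simpl nv.
  unfold injections. rewrite sumR_filter.
  rewrite (sumR_ext _ (fun l =>
      ind (Nat.eqb (nth 0 l 0%nat) (fst f) && Nat.eqb (nth 1 l 0%nat) (snd f))
    + ind (Nat.eqb (nth 0 l 0%nat) (snd f) && Nat.eqb (nth 1 l 0%nat) (fst f)))).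
  - rewrite sumR_plus, !count2 by lia. simpl; lra.
  - intros l Hl. apply tuples_prop in Hl as [Hlen _].
    destruct l as [| x [| y [| z l]]]; simpl in Hlen; try lia.
    unfold copy_through, hits, samepair; simpl.
    destruct f as [a b]; simpl in *.
    destruct (Nat.eqb_spec x y), (Nat.eqb_spec a x), (Nat.eqb_spec b y), (Nat.eqb_spec a y),
      (Nat.eqb_spec b x), (Nat.eqb_spec x a), (Nat.eqb_spec y b), (Nat.eqb_spec x b),
      (Nat.eqb_spec y a); subst; try lia; destruct (X _ _); simpl; lra.
Qed.

(** * Effect of resampling one pair on the copy counts *)

(** l is a copy through e in X + f that is lost in X - f: it is a copy through e
    in X + f and sends some edge other than the one hitting e onto f. *)
Definition gains (E : list (nat * nat)) (X : config) (e f : nat * nat) (l : list nat) : bool :=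
  copy_through E (addE X f) e l && existsb (fun p => hits f l p && negb (hits e l p)) E.

Definition gain (n : nat) (G : graph) (X : config) (e f : nat * nat) : R :=
  INR (length (filter (gains (edges G) X e f) (injections (nv G) n))).

Lemma forallb_orb_split {A} (x a b : A -> bool) E :
  forallb (fun p => x p && negb (a p) || b p) E =
  forallb (fun p => x p || a p || b p) E && negb (existsb (fun p => a p && negb (b p)) E).
Proof.
  induction E as [| h E IH]; simpl; auto. rewrite IH.
  destruct (x h), (a h), (b h); simpl;
  destruct (forallb (fun p => x p || a p || b p) E),
    (existsb (fun p => a p && negb (b p)) E); reflexivity.
Qed.

Lemma forallb_andb_split {A} (x a : A -> bool) E :
  forallb (fun p => x p && negb (a p)) E =
  forallb (fun p => x p || a p) E && negb (existsb a E).
Proof.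
  induction E as [| h E IH]; simpl; auto. rewrite IH.
  destruct (x h), (a h); simpl;
  destruct (forallb (fun p => x p || a p) E), (existsb a E); reflexivity.
Qed.

Lemma copy_through_remE E X e f l :
  copy_through E (remE X f) e l =
  copy_through E (addE X f) e l && negb (existsb (fun p => hits f l p && negb (hits e l p)) E).
Proof.
  unfold copy_through, addE, remE, hits.
  rewrite (forallb_orb_split (fun p => X (nth (fst p) l 0%nat) (nth (snd p) l 0%nat))
                     (fun p => samepair f (nth (fst p) l 0%nat) (nth (snd p) l 0%nat))
                     (fun p => samepair e (nth (fst p) l 0%nat) (nth (snd p) l 0%nat))).
  destruct (forallb _ E), (existsb _ E), (existsb _ E); reflexivity.
Qed.

Lemma NGe_addE n G X e f :
  INR (NGe n G (addE X f) e) = INR (NGe n G (remE X f) e) + gain n G X e f.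
Proof.
  unfold gain. rewrite !NGe_copy_through, !len_filter, <- sumR_plus.
  apply sumR_ext; intros l _. rewrite copy_through_remE; unfold gains.
  destruct (copy_through _ _ _ _), (existsb _ _); simpl; lra.
Qed.

(** N_G(X+f) = N_G(X-f) + N_G(X,f): the copies gained are those through f. *)
Lemma NG_addE n G X f :
  INR (NG n G (addE X f)) = INR (NG n G (remE X f)) + INR (NGe n G X f).
Proof.
  rewrite !NG_copy, NGe_copy_through, !len_filter, <- sumR_plus.
  apply sumR_ext; intros l _. unfold copy, copy_through, addE, remE, hits.
  rewrite (forallb_andb_split (fun p => X (nth (fst p) l 0%nat) (nth (snd p) l 0%nat))
                      (fun p => samepair f (nth (fst p) l 0%nat) (nth (snd p) l 0%nat))).
  destruct (forallb _ _), (existsb _ _); simpl; lra.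
Qed.

Lemma samepair_true f a b : samepair f a b = true ->
  (fst f = a /\ snd f = b) \/ (fst f = b /\ snd f = a).
Proof.
  unfold samepair; intros H. apply orb_true_iff in H as [H | H];
    apply andb_true_iff in H as [H1 H2]; apply Nat.eqb_eq in H1; apply Nat.eqb_eq in H2; auto.
Qed.

Lemma addE_id n X f : is_config n X -> X (fst f) (snd f) = true -> addE X f = X.
Proof.
  intros [Hsym _] Hf. apply functional_extensionality; intro a.
  apply functional_extensionality; intro b. unfold addE.
  destruct (samepair f a b) eqn:Hs; [| apply orb_false_r].
  apply samepair_true in Hs as [[<- <-] | [<- <-]]; [rewrite Hf | rewrite Hsym, Hf]; auto.
Qed.

Lemma remE_id n X f : is_config n X -> X (fst f) (snd f) = false -> remE X f = X.
Proof.
  intros [Hsym _] Hf. apply functional_extensionality; intro a.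
  apply functional_extensionality; intro b. unfold remE.
  destruct (samepair f a b) eqn:Hs; [| simpl; apply andb_true_r].
  apply samepair_true in Hs as [[<- <-] | [<- <-]]; [rewrite Hf | rewrite Hsym, Hf]; auto.
Qed.

(** * Double counting of gained copies *)

Lemma hits_unique g l E p b : NoDup l ->
  (forall q, In q E -> (fst q < snd q < length l)%nat) -> In p E -> In b E ->
  hits g l p = true -> hits g l b = true -> p = b.
Proof.
  intros Hnd HE Hp Hb H1 H2. pose proof (HE p Hp) as Hp'; pose proof (HE b Hb) as Hb'.
  unfold hits in *. apply samepair_true in H1, H2.
  rewrite NoDup_nth with (d := 0%nat) in Hnd.
  destruct p as [p1 p2], b as [b1 b2]; simpl in *.
  destruct H1 as [[A1 A2] | [A1 A2]], H2 as [[B1 B2] | [B1 B2]].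
  - f_equal; apply Hnd; try lia; congruence.
  - exfalso. assert (p1 = b2) by (apply Hnd; [lia | lia | congruence]).
    assert (p2 = b1) by (apply Hnd; [lia | lia | congruence]). lia.
  - exfalso. assert (p1 = b2) by (apply Hnd; [lia | lia | congruence]).
    assert (p2 = b1) by (apply Hnd; [lia | lia | congruence]). lia.
  - f_equal; apply Hnd; try lia; congruence.
Qed.

Lemma graph_injection n G l : is_graph G -> In l (injections (nv G) n) ->
  NoDup l /\ (forall q, In q (edges G) -> (fst q < snd q < length l)%nat).
Proof.
  intros [_ HG] Hl. apply inj_prop in Hl as [Hnd [Hlen _]]. split; auto.
  intros q Hq. rewrite Hlen. apply HG; auto.
Qed.

Lemma sum_pairs_samepair_le1 n x y :
  sumR (map (fun f => ind (samepair f x y)) (all_pairs n)) <= 1.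
Proof.
  apply sum_ind_le1; [apply all_pairs_NoDup |].
  intros f g Hf Hg H1 H2. apply all_pairs_In in Hf, Hg.
  apply samepair_true in H1, H2. destruct f as [f1 f2], g as [g1 g2]; simpl in *.
  f_equal; lia.
Qed.

Lemma sum_pairs_samepair_eq1 n x y : x <> y -> (x < n)%nat -> (y < n)%nat ->
  sumR (map (fun f => ind (samepair f x y)) (all_pairs n)) = 1.
Proof.
  intros Hxy Hx Hy. apply Rle_antisym; [apply sum_pairs_samepair_le1 |].
  set (f0 := if Nat.ltb x y then (x, y) else (y, x)).
  assert (Hf0 : In f0 (all_pairs n)).
  { apply all_pairs_In. unfold f0. destruct (Nat.ltb x y) eqn:E;
    [apply Nat.ltb_lt in E | apply Nat.ltb_ge in E]; simpl; lia. }
  assert (Hs : samepair f0 x y = true).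
  { unfold f0, samepair. destruct (Nat.ltb x y); simpl; rewrite !Nat.eqb_refl; simpl;
    [| rewrite orb_true_r]; auto. }
  eapply Rle_trans; [| apply (sumR_single_le _ _ f0 Hf0)].
  - cbv beta; rewrite Hs; simpl; lra.
  - intros; apply ind_nonneg.
Qed.

(** Upper bound: a copy gained through f hits f at exactly one edge b, and
    is then a copy through e of G - b in X; so, per injection, the number of
    pairs f it is gained for is at most the number of b it is such a copy for. *)
Lemma gains_count_upper n G X e l : is_graph G -> In l (injections (nv G) n) ->
  sumR (map (fun f => ind (gains (edges G) X e f l)) (all_pairs n)) <=
  sumR (map (fun b => ind (copy_through (edges (delete_edge G b)) X e l)) (edges G)).
Proof.
  intros HG Hl. destruct (graph_injection n G l HG Hl) as [Hnd HE].
  unfold delete_edge; simpl. set (E := edges G) in *.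
  apply Rle_trans with (sumR (map (fun f => sumR (map (fun b =>
      ind (hits f l b) * ind (copy_through (remove pair_eq_dec b E) X e l)) E)) (all_pairs n))).
  - apply sumR_le; intros f Hf. destruct (gains E X e f l) eqn:HR;
      [| simpl; apply sumR_nonneg; intros; apply Rmult_le_pos; apply ind_nonneg].
    unfold gains in HR. apply andb_true_iff in HR as [HQ Hex].
    apply existsb_exists in Hex as [b [Hb Hbb]]. apply andb_true_iff in Hbb as [Hfb Heb].
    apply negb_true_iff in Heb.
    assert (HQb : copy_through (remove pair_eq_dec b E) X e l = true).
    { unfold copy_through in HQ |- *. apply andb_true_iff in HQ as [HQ1 HQ2].
      apply andb_true_iff; split.
      - apply forallb_forall; intros q Hq. apply in_remove in Hq as [Hq Hqb].
        rewrite forallb_forall in HQ1. specialize (HQ1 q Hq). unfold addE in HQ1.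
        destruct (samepair f (nth (fst q) l 0%nat) (nth (snd q) l 0%nat)) eqn:Hfq.
        + exfalso; apply Hqb. eapply hits_unique; eauto.
        + rewrite orb_false_r in HQ1; auto.
      - apply existsb_exists in HQ2 as [q [Hq Hqe]]. apply existsb_exists; exists q.
        split; auto. apply in_in_remove; auto. intros ->. congruence. }
    eapply Rle_trans; [| apply (sumR_single_le _ _ b Hb)].
    + cbv beta; rewrite Hfb, HQb; simpl; lra.
    + intros; apply Rmult_le_pos; apply ind_nonneg.
  - rewrite sumR_swap. apply sumR_le; intros b Hb.
    rewrite (sumR_ext _ (fun f => ind (copy_through (remove pair_eq_dec b E) X e l) *
        ind (samepair f (nth (fst b) l 0%nat) (nth (snd b) l 0%nat))))
      by (intros; unfold hits; lra).
    rewrite sumR_scal.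
    pose proof (sum_pairs_samepair_le1 n (nth (fst b) l 0%nat) (nth (snd b) l 0%nat)).
    pose proof (ind_nonneg (copy_through (remove pair_eq_dec b E) X e l)). nra.
Qed.

Lemma copy_through_addE E X e f l :
  copy_through E X e l = true -> copy_through E (addE X f) e l = true.
Proof.
  unfold copy_through, addE; intros H. apply andb_true_iff in H as [H1 H2].
  apply andb_true_iff; split; auto.
  rewrite forallb_forall in *. intros q Hq. specialize (H1 q Hq).
  destruct (X _ _), (hits e l q), (samepair f _ _); simpl in *; auto.
Qed.

Lemma hits_other_le_gains G X e f l n :
  is_graph G -> In l (injections (nv G) n) -> is_config n X ->
  copy_through (edges G) X e l = true ->
  sumR (map (fun p => ind (hits f l p && negb (hits e l p))) (edges G)) <=
  ind (X (fst f) (snd f) && gains (edges G) X e f l).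
Proof.
  intros HG Hl HX HQ. destruct (graph_injection n G l HG Hl) as [Hnd HE].
  eapply Rle_trans; [apply sum_ind_le_exists; [apply HG |] |].
  { intros p q Hp Hq H1 H2. apply andb_true_iff in H1 as [H1 _].
    apply andb_true_iff in H2 as [H2 _]. eapply hits_unique; eauto. }
  destruct (existsb _ (edges G)) eqn:Hex; [| simpl; apply ind_nonneg].
  apply existsb_exists in Hex as [p [Hp Hpp]].
  apply andb_true_iff in Hpp as [Hfp Hep]. apply negb_true_iff in Hep.
  assert (HXp : X (nth (fst p) l 0%nat) (nth (snd p) l 0%nat) = true).
  { unfold copy_through in HQ. apply andb_true_iff in HQ as [HQ1 _].
    rewrite forallb_forall in HQ1. specialize (HQ1 p Hp).
    rewrite Hep, orb_false_r in HQ1; auto. }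
  assert (HXf : X (fst f) (snd f) = true).
  { unfold hits in Hfp. apply samepair_true in Hfp as [[-> ->] | [-> ->]]; auto.
    destruct HX as [Hsym _]; rewrite Hsym; auto. }
  assert (HRf : gains (edges G) X e f l = true).
  { unfold gains. rewrite copy_through_addE by auto. simpl. apply existsb_exists.
    exists p; split; auto. rewrite Hfp, Hep; auto. }
  rewrite HXf, HRf; simpl; lra.
Qed.

(** Lower bound: a copy through e in X is gained for each of the |E| - 1 pairs
    of X onto which it sends an edge other than the one hitting e. *)
Lemma gains_count_lower n G X e l :
  is_graph G -> In l (injections (nv G) n) -> is_config n X ->
  copy_through (edges G) X e l = true ->
  INR (length (edges G)) - 1 <=
  sumR (map (fun f => ind (X (fst f) (snd f) && gains (edges G) X e f l)) (all_pairs n)).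
Proof.
  intros HG Hl HX HQ. destruct (graph_injection n G l HG Hl) as [Hnd HE].
  pose proof (inj_prop _ _ _ Hl) as [_ [_ Hlt]].
  eapply Rle_trans;
    [| apply sumR_le; intros f _; apply (hits_other_le_gains G X e f l n); auto].
  rewrite sumR_swap.
  rewrite (sumR_ext _ (fun p => ind (negb (hits e l p)) * sumR (map (fun f =>
      ind (samepair f (nth (fst p) l 0%nat) (nth (snd p) l 0%nat))) (all_pairs n)))).
  2:{ intros p Hp. rewrite <- sumR_scal. apply sumR_ext; intros f Hf.
      rewrite ind_andb; unfold hits; lra. }
  rewrite (sumR_ext _ (fun p => 1 - ind (hits e l p))).
  2:{ intros p Hp. pose proof (HE p Hp).
      rewrite sum_pairs_samepair_eq1, ind_negb; [lra | | |].
      - rewrite NoDup_nth with (d := 0%nat) in Hnd.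
        intro Heq. apply Hnd in Heq; lia.
      - apply Hlt, nth_In; lia.
      - apply Hlt, nth_In; lia. }
  rewrite sumR_minus, sumR_const.
  assert (sumR (map (fun p => ind (hits e l p)) (edges G)) <= 1).
  { apply sum_ind_le1; [apply HG |]. intros; eapply hits_unique; eauto. }
  lra.
Qed.

Lemma gain_total_le n G X e : is_graph G ->
  sumR (map (fun f => gain n G X e f) (all_pairs n)) <=
  sumR (map (fun b => INR (NGe n (delete_edge G b) X e)) (edges G)).
Proof.
  intros HG. unfold gain.
  rewrite (sumR_ext _ (fun f => sumR (map (fun l => ind (gains (edges G) X e f l))
                                          (injections (nv G) n))))
    by (intros; apply len_filter).
  rewrite (sumR_ext (fun b => INR (NGe n (delete_edge G b) X e))
             (fun b => sumR (map (fun l => ind (copy_through (edges (delete_edge G b)) X e l))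
                                 (injections (nv G) n))))
    by (intros; rewrite NGe_copy_through; apply len_filter).
  rewrite sumR_swap, <- (sumR_swap (fun l b =>
    ind (copy_through (edges (delete_edge G b)) X e l))).
  apply sumR_le; intros l Hl. apply gains_count_upper; auto.
Qed.

Lemma gain_present_ge n G X e : is_graph G -> is_config n X ->
  (INR (length (edges G)) - 1) * INR (NGe n G X e) <=
  sumR (map (fun f => ind (X (fst f) (snd f)) * gain n G X e f) (all_pairs n)).
Proof.
  intros HG HX. unfold gain.
  rewrite (sumR_ext _ (fun f => sumR (map (fun l =>
      ind (X (fst f) (snd f) && gains (edges G) X e f l)) (injections (nv G) n)))).
  2:{ intros f _. rewrite len_filter, <- sumR_scal.
      apply sumR_ext; intros; symmetry; apply ind_andb. }
  rewrite sumR_swap, NGe_copy_through, len_filter, <- sumR_scal.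
  apply sumR_le; intros l Hl.
  destruct (copy_through (edges G) X e l) eqn:HQ; simpl ind.
  - rewrite Rmult_1_r. apply gains_count_lower; auto.
  - rewrite Rmult_0_r. apply sumR_nonneg; intros; apply ind_nonneg.
Qed.

(** * Normalised densities r_G and rbar *)

Lemma rootR_pow k x : (1 <= k)%nat -> 0 <= x -> rootR k x ^ k = x.
Proof.
  intros Hk Hx. unfold rootR. destruct (Req_EM_T x 0) as [-> | Hne].
  - apply pow_i; lia.
  - assert (HkR : INR k <> 0) by (apply not_0_INR; lia).
    rewrite <- Rpower_pow by (unfold Rpower; apply exp_pos).
    rewrite Rpower_mult, Rinv_l by auto. apply Rpower_1; lra.
Qed.

Lemma rG_nonneg n G X e : 0 <= rG n G X e.
Proof.
  unfold rG, rootR. destruct (Req_EM_T _ 0); [lra |]. unfold Rpower; left; apply exp_pos.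
Qed.

Lemma NGe_via_rG L n G Y e : in_HL L G -> (0 < n)%nat ->
  INR (NGe n G Y e) =
  2 * INR (length (edges G)) * npow n G * rG n G Y e ^ (length (edges G) - 1).
Proof.
  intros [_ [_ Hk]] Hn. unfold rG. pose proof (npow_pos n G Hn).
  assert (INR (length (edges G)) <> 0) by (apply not_0_INR; lia).
  rewrite rootR_pow; [field; split; lra | lia |].
  apply Rmult_le_pos; [apply pos_INR | left; apply Rinv_0_lt_compat].
  apply Rmult_lt_0_compat; [apply Rmult_lt_0_compat; [lra | apply lt_0_INR; lia] | auto].
Qed.

Lemma maxR_ge x l : In x l -> x <= maxR l.
Proof.
  induction l; simpl; intros H; [contradiction |].
  destruct H as [<- | H]; [apply Rmax_l |].
  eapply Rle_trans; [apply IHl; auto | apply Rmax_r].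
Qed.

(** rbar really is the maximum: every G in H_L (possibly with its edges listed
    in another order than in [HL_list]) and every pair give r_G <= rbar. *)
Lemma rG_le_rbar L n G X e : in_HL L G -> is_pair n e -> rG n G X e <= rbar L n X.
Proof.
  destruct G as [m E]. intros [[Hnd HE] [HL H2]] He. unfold nv, edges in *; simpl in *.
  destruct (sublists_perm pair_eq_dec (all_pairs m) E Hnd) as [s [Hs Hp]].
  { intros p Hpin. apply all_pairs_In. apply HE; auto. }
  assert (Heq : rG n (m, s) X e = rG n (m, E) X e).
  { unfold rG, npow; simpl. rewrite (NGe_perm n m s E X e Hp), (Permutation_length Hp). auto. }
  rewrite <- Heq. apply maxR_ge. apply in_flat_map.
  exists e; split; [apply all_pairs_In; destruct He; lia |].
  apply (in_map (fun G => rG n G X e)). unfold HL_list. apply in_flat_map.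
  exists m; split; [apply in_seq; lia |].
  apply in_map, filter_In; split; auto.
  apply Nat.leb_le. rewrite (Permutation_length Hp); auto.
Qed.

(** Every pattern on at most L vertices satisfies
    N_H(X,f) <= 2 |E_H| n^{|V_H|-2} rbar(X)^{|E_H|-1}: for |E_H| >= 2 this is
    the maximality of rbar, for one edge the direct count, for none trivial. *)
Lemma NGe_density_le L n H X f : is_graph H -> (nv H <= L)%nat -> is_pair n f ->
  INR (NGe n H X f) <=
  2 * INR (length (edges H)) * npow n H * rbar L n X ^ (length (edges H) - 1).
Proof.
  intros HH HL Hf.
  assert (Hn : (0 < n)%nat) by (destruct Hf; lia).
  pose proof (npow_pos n H Hn).
  destruct (edges H) as [| q [| q' E']] eqn:HE.
  - rewrite NGe_nil by auto. simpl; lra.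
  - assert (Hv : (2 <= nv H)%nat).
    { destruct HH as [_ HH]. assert (In q (edges H)) by (rewrite HE; simpl; auto).
      apply HH in H1. lia. }
    rewrite (npow_nat n H Hv). simpl length; simpl INR; simpl pow.
    pose proof (NGe_one_edge_le n H X f q HH HE Hf). lra.
  - assert (Hin : in_HL L H) by (repeat split; try apply HH; auto; rewrite HE; simpl; lia).
    rewrite (NGe_via_rG L n H X f Hin Hn), HE.
    assert (rG n H X f ^ (length (q :: q' :: E') - 1) <=
            rbar L n X ^ (length (q :: q' :: E') - 1)).
    { apply pow_incr. split; [apply rG_nonneg | apply rG_le_rbar; auto]. }
    assert (0 <= 2 * INR (length (q :: q' :: E')) * npow n H)
      by (pose proof (pos_INR (length (q :: q' :: E'))); nra).
    apply Rmult_le_compat_l; auto.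
Qed.

Lemma NGe_delete_edge_le L n G X e b : is_graph G -> (nv G <= L)%nat ->
  In b (edges G) -> is_pair n e ->
  INR (NGe n (delete_edge G b) X e) <=
  2 * (INR (length (edges G)) - 1) * npow n G * rbar L n X ^ (length (edges G) - 2).
Proof.
  intros HG HL Hb He.
  pose proof (delete_edge_length G b (proj1 HG) Hb) as Hlen.
  assert (Hk : (1 <= length (edges G))%nat) by (destruct (edges G); simpl in *; [easy | lia]).
  eapply Rle_trans; [apply NGe_density_le; eauto using delete_edge_graph |].
  rewrite Hlen, minus_INR by lia. simpl INR.
  replace (length (edges G) - 1 - 1)%nat with (length (edges G) - 2)%nat by lia.
  right; reflexivity.
Qed.

Lemma glauber_drift s n Gs beta G X e : is_config n X ->
  glauberE s n Gs beta X (fun Y => (INR (NGe n G Y e) - INR (NGe n G X e)) / npow n G) =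
  / binom2R n * / npow n G *
  (sumR (map (fun f => padd s n Gs beta X f * gain n G X e f) (all_pairs n)) -
   sumR (map (fun f => ind (X (fst f) (snd f)) * gain n G X e f) (all_pairs n))).
Proof.
  intros HX. unfold glauberE. rewrite <- sumR_minus, Rmult_assoc, <- (sumR_scal (/ npow n G)).
  f_equal. apply sumR_ext; intros f _.
  pose proof (NGe_addE n G X e f) as Hsplit.
  destruct (X (fst f) (snd f)) eqn:Hx; simpl ind.
  - rewrite (addE_id n X f HX Hx) in *. rewrite Hsplit. unfold Rdiv; ring.
  - rewrite (remE_id n X f HX Hx) in *. rewrite Hsplit. unfold Rdiv; ring.
Qed.

Lemma logistic_mono a b : a <= b -> exp a / (1 + exp a) <= exp b / (1 + exp b).
Proof.
  intros H. assert (Hab : exp a <= exp b).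
  { destruct (Rle_lt_or_eq_dec a b H) as [Hlt | ->]; [left; apply exp_increasing; auto | lra]. }
  pose proof (exp_pos a). pose proof (exp_pos b).
  replace (exp a / (1 + exp a)) with (1 - / (1 + exp a)) by (field; lra).
  replace (exp b / (1 + exp b)) with (1 - / (1 + exp b)) by (field; lra).
  assert (/ (1 + exp b) <= / (1 + exp a)) by (apply Rinv_le_contravar; lra). lra.
Qed.

Lemma Ham_increment s n Gs beta X f :
  Ham s n Gs beta (addE X f) - Ham s n Gs beta (remE X f) =
  sumR (map (fun i => beta i * INR (NGe n (Gs i) X f) / npow n (Gs i)) (seq 0 s)).
Proof.
  unfold Ham. rewrite <- sumR_minus. apply sumR_ext; intros.
  rewrite NG_addE. unfold Rdiv; ring.
Qed.

Section Acceptance.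

Variables (s L : nat) (Gs : nat -> graph) (beta : nat -> R).
Hypothesis HGs : forall i, (i < s)%nat -> is_graph (Gs i).
Hypothesis HG0 : Gs 0%nat = (2%nat, [(0%nat, 1%nat)]).
Hypothesis HL : forall i, (i < s)%nat -> (nv (Gs i) <= L)%nat.
Hypothesis Hbeta : forall i, (1 <= i < s)%nat -> 0 < beta i.

(** Each term of the energy increment is bounded by the matching term of
    Psi(rbar): with equality for the edge G_0 (whose beta_0 may be negative),
    and by [NGe_density_le] for the other patterns, whose beta_i are positive. *)
Lemma Ham_term_le n X f i : is_pair n f -> (i < s)%nat ->
  beta i * INR (NGe n (Gs i) X f) / npow n (Gs i) <=
  2 * beta i * INR (length (edges (Gs i))) * rbar L n X ^ (length (edges (Gs i)) - 1).
Proof.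
  intros Hf Hi.
  destruct i as [| i].
  - rewrite HG0, NGe_edge by auto. unfold npow; simpl. lra.
  - assert (Hn : (0 < n)%nat) by (destruct Hf; lia).
    pose proof (npow_pos n (Gs (S i)) Hn).
    pose proof (Hbeta (S i) ltac:(lia)).
    pose proof (NGe_density_le L n (Gs (S i)) X f (HGs _ Hi) (HL _ Hi) Hf).
    apply Rmult_le_reg_r with (npow n (Gs (S i))); auto.
    unfold Rdiv. rewrite Rmult_assoc, Rinv_l by lra. nra.
Qed.

Lemma padd_le_phi n X f : is_pair n f -> padd s n Gs beta X f <= phi s Gs beta (rbar L n X).
Proof.
  intros Hf. unfold padd, phi. apply logistic_mono.
  rewrite Ham_increment. unfold Psi. apply sumR_le; intros i Hi. apply in_seq in Hi.
  apply Ham_term_le; auto; lia.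
Qed.

Lemma gain_weighted_le n G X e : is_graph G -> (nv G <= L)%nat -> is_pair n e ->
  sumR (map (fun f => padd s n Gs beta X f * gain n G X e f) (all_pairs n)) <=
  phi s Gs beta (rbar L n X) *
  (INR (length (edges G)) *
   (2 * (INR (length (edges G)) - 1) * npow n G * rbar L n X ^ (length (edges G) - 2))).
Proof.
  intros HG HLG He.
  apply Rle_trans with (sumR (map (fun f => phi s Gs beta (rbar L n X) * gain n G X e f)
                                  (all_pairs n))).
  { apply sumR_le; intros f Hf. apply Rmult_le_compat_r; [apply pos_INR |].
    apply padd_le_phi. apply all_pairs_In in Hf. split; lia. }
  rewrite sumR_scal. apply Rmult_le_compat_l.
  { unfold phi. pose proof (exp_pos (Psi s Gs beta (rbar L n X))).
    left; apply Rdiv_lt_0_compat; lra. }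
  eapply Rle_trans; [apply gain_total_le; auto |].
  rewrite <- sumR_const. apply sumR_le; intros b Hb.
  apply NGe_delete_edge_le; auto.
Qed.

End Acceptance.

Theorem mainTheorem5 :
  forall (s L : nat) (Gs : nat -> graph) (beta : nat -> R),
    (1 <= s)%nat ->
    (forall i, (i < s)%nat -> is_graph (Gs i)) ->
    Gs 0%nat = (2%nat, [(0%nat, 1%nat)]) ->
    (forall i, (i < s)%nat -> (nv (Gs i) <= L)%nat) ->
    (forall i, (1 <= i < s)%nat -> 0 < beta i) ->
    exists eta : nat -> R,
      Un_cv eta 0 /\
      forall (n : nat) (X : config) (e : nat * nat) (G : graph),
        is_config n X -> is_pair n e -> in_HL L G ->
        glauberE s n Gs beta X
          (fun Y => (INR (NGe n G Y e) - INR (NGe n G X e)) / npow n G)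
        <= (1 + eta n) * (2 / binom2R n)
           * INR (length (edges G)) * INR (length (edges G) - 1)
           * (- (rG n G X e) ^ (length (edges G) - 1)
              + phi s Gs beta (rbar L n X) * (rbar L n X) ^ (length (edges G) - 2)).
Proof.
  intros s L Gs beta _ HGs HG0 HL Hbeta.
  (* the error term can be taken identically zero *)
  exists (fun _ => 0). split.
  { intros eps Heps. exists 0%nat. intros. unfold R_dist. rewrite Rminus_0_r, Rabs_R0. auto. }
  intros n X e G HX He HGL. pose proof HGL as [HG [HLG Hk]].
  assert (Hn : 2 <= INR n) by (replace 2 with (INR 2) by (simpl; lra); apply le_INR; destruct He; lia).
  assert (HB : 0 < binom2R n) by (unfold binom2R; nra).
  pose proof (npow_pos n G ltac:(destruct He; lia)) as Hc.
  pose proof (gain_weighted_le s L Gs beta HGs HG0 HL Hbeta n G X e HG HLG He) as Hgain.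
  pose proof (gain_present_ge n G X e HG HX) as Hloss.
  rewrite (NGe_via_rG L n G X e HGL ltac:(destruct He; lia)) in Hloss.
  rewrite glauber_drift, minus_INR, Rplus_0_r by (auto || lia). simpl INR.
  set (k := INR (length (edges G))) in *.
  set (T := - rG n G X e ^ (length (edges G) - 1)
            + phi s Gs beta (rbar L n X) * rbar L n X ^ (length (edges G) - 2)).
  replace (1 * (2 / binom2R n) * k * (k - 1) * T)
    with (/ binom2R n * / npow n G * (npow n G * (2 * k * (k - 1) * T))) by (field; lra).
  apply Rmult_le_compat_l; [left; apply Rmult_lt_0_compat; apply Rinv_0_lt_compat; auto |].
  unfold T. nra.
Qed.
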